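(* Let $P$ be an interrupt-driven program as described in the context. Let $l$ be a load of a global variable $v$ in handler $T_i$, and let $s$ be a store to $v$ in handler $T_j$ with $i \neq j$. Suppose at least one of the following holds: (1) $l$ is a covered load and $s$ is an intercepted store; (2) $l$ is a covered load and $p_j \le p_i$; (3) $s$ is an intercepted store and $p_i \le p_j$. Then in no execution of $P$ under the interrupt semantics does an executed instance of $l$ read from an executed instance of $s$. That is, $\mathrm{MustNotReadFrom}(l,s)$ is sound.
   Context: An interrupt-driven program $P$ consists of finitely many interrupt handlers $T_1,\dots,T_n$. Each handler $T_i$ is a sequential program given by a control-flow graph $\langle N_i, n^i_0, \delta_i\rangle$ with entry node $n^i_0$ and an exit node. Handlers access local variables and shared global variables. Each handler $T_i$ has an integer priority $p_i$, and each statement belongs to exactly one handler. An invocation of $T_i$ executes statements one at a time along a path of its control-flow graph from $n^i_0$, and it completes on reaching the exit node. Interrupt semantics: an execution is a finite sequence of steps, each executing one statement of some invocation. Invocations of any handler may be started any number of times. At every moment, the started-but-not-completed invocations form a stack whose handler priorities are strictly increasing from bottom to top. Only the top invocation may take a step. A new invocation of $T_j$ may be started only if the stack is empty or $p_j$ is strictly greater than the priority of the top invocation's handler. An invocation is popped when it completes. Thus a handler can only be preempted by a handler of strictly higher priority, and invocations nest. Reads-from: in an execution, an executed instance of a load of $v$ reads from an executed instance of a store to $v$ if that store instance is the last store to $v$ executed before the load instance. Dominance and post-dominance are taken within a single handler's control-flow graph. A statement $a$ dominates $b$ if every path from the entry node to $b$ passes through $a$. A statement $a \neq b$ post-dominates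 $b$ if every path from $b$ to the exit node passes through $a$ after $b$. A load $l$ of $v$ in $T_i$ is a covered load if some store to $v$ in $T_i$ dominates $l$. A store $s$ to $v$ in $T_j$ is an intercepted store if some other store $s_2 \neq s$ to $v$ in $T_j$ post-dominates $s$. *)

From mathcomp Require Import all_boot all_order all_algebra.
Set Implicit Arguments. Unset Strict Implicit. Unset Printing Implicit Defensive.
Import Order.TTheory GRing.Theory Num.Theory.

(* Global variables are named by nat.  Statements touching only local
   variables (or doing no memory access) are [AOther]. *)
Inductive action := ALoad of nat | AStore of nat | AOther.

(* Control-flow graph of one handler; nodes (= statements) are nats. *)
Record cfg := Cfg {
  entry : nat;
  exit  : nat;
  edge  : rel nat;
  act   : nat -> action
}.

(* CFG paths: [x :: p] with [path (edge c) x p]. *)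
Definition dominates (c : cfg) (a b : nat) : Prop :=
  forall p : seq nat, path (edge c) (entry c) p -> last (entry c) p = b ->
    a \in entry c :: p.

Definition postdominates (c : cfg) (a b : nat) : Prop :=
  a <> b /\
  forall p : seq nat, path (edge c) b p -> last b p = exit c -> a \in p.

Definition covered_load (c : cfg) (l : nat) (v : nat) : Prop :=
  act c l = ALoad v /\ exists s, act c s = AStore v /\ dominates c s l.

Definition intercepted_store (c : cfg) (s : nat) (v : nat) : Prop :=
  act c s = AStore v /\
  exists s2, s2 <> s /\ act c s2 = AStore v /\ postdominates c s2 s.

Section Semantics.
Variables (I : finType) (P : I -> cfg) (prio : I -> int).

(* A frame is an invocation: its handler and the next node to execute.
   A stack lists frames from top to bottom. *)
Definition frame := (I * nat)%type.
Definition stack := seq frame.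

Definition can_start (st : stack) (j : I) : Prop :=
  match st with
  | [::] => True
  | (i, _) :: _ => (prio i < prio j)%R
  end.

(* Label [None]: a new invocation of
   some handler starts; label [Some (i, n)]: the top invocation (of handler
   [i]) executes statement [n]; it then either completes (n is the exit
   node) or moves to a CFG successor of n. *)
Definition step (st : stack) (lbl : option frame) (st' : stack) : Prop :=
  (exists j, lbl = None /\ can_start st j /\ st' = (j, entry (P j)) :: st)
  \/
  (exists i n rest, st = (i, n) :: rest /\ lbl = Some (i, n) /\
     ((n = exit (P i) /\ st' = rest) \/
      (n <> exit (P i) /\ exists m, edge (P i) n m /\ st' = (i, m) :: rest))).

Definition execution (sts : seq stack) (lbls : seq (option frame)) : Prop :=
  size sts = (size lbls).+1 /\ nth [::] sts 0 = [::] /\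
  forall k, k < size lbls ->
    step (nth [::] sts k) (nth None lbls k) (nth [::] sts k.+1).

Definition is_store_to (v : nat) (lbl : option frame) : bool :=
  match lbl with
  | Some (i, n) => if act (P i) n is AStore w then w == v else false
  | None => false
  end.

Definition reads_from (lbls : seq (option frame)) (v : nat)
    (j : I) (s : nat) (a : nat) (i : I) (l : nat) (b : nat) : Prop :=
  a < b /\ b < size lbls /\
  nth None lbls a = Some (j, s) /\ nth None lbls b = Some (i, l) /\
  act (P j) s = AStore v /\ act (P i) l = ALoad v /\
  forall c, a < c -> c < b -> ~~ is_store_to v (nth None lbls c).

End Semantics.

From mathcomp Require Import all_boot all_order all_algebra.
From mathcomp Require Import zify.
Import Order.TTheory GRing.Theory Num.Theory.

Set Implicit Arguments.
Unset Strict Implicit.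
Unset Printing Implicit Defensive.

(* A covered load l is preceded, within its own invocation, by a store to v
   that dominates it; since no store to v may separate s from l, that store and
   hence the start of l's invocation precede s, so s runs while l's invocation
   is pending: handler j preempted handler i and p_i < p_j.  Dually, if the
   invocation of an intercepted store s returned before l, it would have run
   the post-dominating store in between; so it is still pending when l runs,
   handler i preempted handler j and p_j < p_i.  Each case of the hypothesis
   contradicts these strict inequalities. *)

Definition nested (I : finType) (prio : I -> int) (st : stack I) : bool :=
  sorted (fun f g : frame I => (prio g.1 < prio f.1)%R) st.

Lemma nested_prio_lt (I : finType) (prio : I -> int) (st X R R' : stack I)
    (i j : I) (x y : nat) :
  nested prio st -> st = X ++ (j, x) :: R -> st = (i, y) :: R' ->
  i != j -> (prio j < prio i)%R.
Proof.
move=> nested_st st_eq top; rewrite {st}st_eq in nested_st top.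
case: X nested_st top => [_ [<- _ _]|f X nestedX [top _]]; first by rewrite eqxx.
subst f.
have lt_trans' : transitive (fun f g : frame I => (prio g.1 < prio f.1)%R).
  by move=> ? ? ? lt1 lt2; apply: lt_trans lt2 lt1.
have sub : subseq [:: (i, y); (j, x)] ((i, y) :: X ++ (j, x) :: R).
  by rewrite /= eqxx sub1seq mem_cat mem_head orbT.
by have /= := subseq_sorted lt_trans' sub nestedX; rewrite andbT.
Qed.

Section Execution.
Variables (I : finType) (P : I -> cfg) (prio : I -> int).
Variables (sts : seq (stack I)) (lbls : seq (option (frame I))).
Hypothesis exec : execution P prio sts lbls.

Local Notation st k := (nth [::] sts k).
Local Notation lbl k := (nth None lbls k).

Lemma exec_step k : k < size lbls -> step P prio (st k) (lbl k) (st k.+1).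
Proof. by case: exec => _ [_]; apply. Qed.

Lemma nested_exec k : k <= size lbls -> nested prio (st k).
Proof.
case: exec => _ [st0 _]; elim: k => [|k IH] lt_k; first by rewrite st0.
have := IH (ltnW lt_k); case: (exec_step lt_k).
  case=> j [_ [can_j ->]]; rewrite /nested.
  by case: (st k) can_j => [|[i n] R] //= lt_ij ->; rewrite andbT.
case=> i [n [R [-> [_ [[_ ->]|[_ [m [_ ->]]]]]]]]; first by move=> /path_sorted.
by rewrite /nested /=; case: R.
Qed.

Lemma label_is_top k f : k < size lbls -> lbl k = Some f ->
  exists R, st k = f :: R.
Proof.
move=> lt_k lbl_k; case: (exec_step lt_k) => [[j [lbl_k' _]]|].
  by rewrite lbl_k in lbl_k'.
case=> i [n [R [-> [lbl_k' _]]]]; exists R.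
by rewrite lbl_k in lbl_k'; case: lbl_k' => ->.
Qed.

Definition executed_between (t u : nat) (j : I) (ys : seq nat) : Prop :=
  forall y, y \in ys -> exists2 c, t <= c < u & lbl c = Some (j, y).

Lemma executed_between_widen t u u' j ys : u <= u' ->
  executed_between t u j ys -> executed_between t u' j ys.
Proof.
by move=> le_uu' ex_ys y /ex_ys[c c_in lbl_c]; exists c => //; lia.
Qed.

Lemma executed_between_rcons t u j ys y : t <= u -> lbl u = Some (j, y) ->
  executed_between t u j ys -> executed_between t u.+1 j (rcons ys y).
Proof.
move=> le_tu lbl_u ex_ys z; rewrite mem_rcons inE => /orP[/eqP->|/ex_ys[c c_in lbl_c]].
  by exists u => //; lia.
by exists c => //; lia.
Qed.

Lemma invocation_run t u j n R : st t = (j, n) :: R -> t <= u <= size lbls ->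
  (exists p, [/\ path (edge (P j)) n p, last n p = exit (P j),
     executed_between t u j (n :: p) & exists2 c, t <= c < u & st c.+1 = R])
  \/ exists X p, [/\ st u = X ++ (j, last n p) :: R, path (edge (P j)) n p
     & executed_between t u j (belast n p)].
Proof.
move=> st_t /andP[le_tu]; rewrite -(subnKC le_tu); elim: (u - t) => [|d IH] le_u.
  by right; exists [::], [::]; rewrite addn0 st_t.
have lt_d : t + d < size lbls by rewrite addnS in le_u.
have le_td : t <= t + d := leq_addr d t.
rewrite addnS; case: (IH (ltnW lt_d)) => [[p [path_p exit_p ex_p [c c_in st_c]]]|].
  left; exists p; split=> //; first exact: executed_between_widen ex_p.
  by exists c => //; lia.
case=> X [p [st_d path_p ex_p]].
have ex_p' := executed_between_widen (leqnSn _) ex_p.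
case: (exec_step lt_d); rewrite st_d.
  by case=> j0 [_ [_ ->]]; right; exists ((j0, entry (P j0)) :: X), p.
case=> i0 [n0 [rest [st_eq [lbl_d step_d]]]].
case: X st_d st_eq lbl_d step_d => [|f X] st_d /= [].
- move=> <- <- <- lbl_d step_d.
  have ex_np : executed_between t (t + d).+1 j (n :: p).
    by rewrite lastI; apply: executed_between_rcons.
  case: step_d => [[exit_p st_pop]|[_ [m [edge_m ->]]]].
    by left; exists p; split=> //; exists (t + d) => //; lia.
  right; exists [::], (rcons p m).
  by rewrite last_rcons rcons_path path_p edge_m belast_rcons.
- move=> _ <- _ step_d.
  case: step_d => [[_ ->]|[_ [m [_ ->]]]]; first by right; exists X, p.
  by right; exists ((i0, m) :: X), p.
Qed.

(* [size R < size (st k')] says that the invocation sitting on [R] has not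
   returned by time [k']. *)
Lemma invocation_start k X i x R : k <= size lbls -> st k = X ++ (i, x) :: R ->
  exists2 t0, t0 < k & st t0.+1 = (i, entry (P i)) :: R /\
    forall k', t0 < k' <= k -> size R < size (st k').
Proof.
case: exec => _ [st0 _]; elim: k X x => [|k IH] X x le_k st_k.
  by move: st_k; rewrite st0; case: X.
have lt_k : k < size lbls by [].
have above_k : size R < size (st k.+1).
  by rewrite st_k size_cat /= addnS ltnS leq_addl.
suff [st_push|[X' [x' st_k']]] : st k.+1 = (i, entry (P i)) :: R \/
    exists X' x', st k = X' ++ (i, x') :: R.
- exists k => //; split=> // k' k'_in.
  by have -> : k' = k.+1 by lia.
- have [t0 lt_t0 [st_t0 above]] := IH X' x' (ltnW lt_k) st_k'.
  exists t0; first lia; split=> // k' k'_in.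
  case: (ltnP k k') => [lt_kk'|le_k'k]; last by apply: above; lia.
  by have -> : k' = k.+1 by lia.
case: (exec_step lt_k); rewrite st_k.
  case=> j0 [_ [_]]; case: X {st_k above_k} => [|f X] /= [].
    by move=> <- -> ->; left.
  by move=> _ st_k; right; exists X, x.
case=> i0 [n0 [rest [st_k' [_ [[_ rest_eq]|[_ [m [_]]]]]]]].
  by right; exists ((i0, n0) :: X), x; rewrite st_k' -rest_eq.
case: X {st_k above_k} => [|f X] /= [].
  by move=> -> _ rest_eq; right; exists [::], n0; rewrite st_k' -rest_eq.
by move=> _ rest_eq; right; exists ((i0, n0) :: X), x; rewrite st_k' -rest_eq.
Qed.

Lemma invocation_pending t u j n R : st t = (j, n) :: R -> t <= u <= size lbls ->
  (forall k, t < k <= u -> size R < size (st k)) ->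
  exists X p, [/\ st u = X ++ (j, last n p) :: R, path (edge (P j)) n p
    & executed_between t u j (belast n p)].
Proof.
move=> st_t le_tu above; case: (invocation_run st_t le_tu) => // -[p [_ _ _]].
by case=> c c_in st_c; have := above c.+1 ltac:(lia); rewrite st_c ltnn.
Qed.

Lemma intercepted_reads_from_prio v i j l s a b :
  intercepted_store (P j) s v -> i != j -> reads_from P lbls v j s a i l b ->
  (prio j < prio i)%R.
Proof.
move=> [_ [s2 [neq_s2s [store_s2 [_ postdom]]]]] neq_ij.
move=> [lt_ab [lt_b [lbl_a [lbl_b [_ [_ no_store]]]]]].
have [Ra st_a] := label_is_top (ltn_trans lt_ab lt_b) lbl_a.
have [Rb st_b] := label_is_top lt_b lbl_b.
have le_ab : a <= b <= size lbls by rewrite (ltnW lt_ab) (ltnW lt_b).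
case: (invocation_run st_a le_ab) => [[p [path_p exit_p ex_p _]]|].
  have [c c_in lbl_c] := ex_p s2 (mem_behead (s := s :: p) (postdom p path_p exit_p)).
  case: (eqVneq c a) => [eq_ca|neq_ca].
    by move: lbl_c; rewrite eq_ca lbl_a => -[s_s2]; case: neq_s2s.
  by have := no_store c ltac:(lia) ltac:(lia); rewrite lbl_c /= store_s2 eqxx.
case=> X [p [st_b' _ _]].
exact: nested_prio_lt (nested_exec (ltnW lt_b)) st_b' st_b neq_ij.
Qed.

Lemma covered_reads_from_prio v i j l s a b :
  covered_load (P i) l v -> i != j -> reads_from P lbls v j s a i l b ->
  (prio i < prio j)%R.
Proof.
move=> [load_l [s' [store_s' dom]]] neq_ij.
move=> [lt_ab [lt_b [lbl_a [lbl_b [_ [_ no_store]]]]]].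
have [Ra st_a] := label_is_top (ltn_trans lt_ab lt_b) lbl_a.
have [Rb st_b] := label_is_top lt_b lbl_b.
have [t0 lt_t0b [st_t0 above]] :=
  invocation_start (ltnW lt_b) (st_b : st b = [::] ++ (i, l) :: Rb).
have pending u : t0 < u <= b -> exists X p,
    [/\ st u = X ++ (i, last (entry (P i)) p) :: Rb,
     path (edge (P i)) (entry (P i)) p
     & executed_between t0.+1 u i (belast (entry (P i)) p)].
  move=> u_in; apply: invocation_pending st_t0 _ _; first by apply/andP; lia.
  by move=> k k_in; apply: above; lia.
have [X [p [st_b' path_p ex_p]]] := pending b ltac:(lia).
have last_p : last (entry (P i)) p = l.
  move: st_b'; rewrite st_b; case: X => [[->]//|f X [_]].
  by move/(congr1 size); rewrite size_cat /=; lia.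
have s'_in : s' \in belast (entry (P i)) p.
  have := dom p path_p last_p; rewrite lastI last_p mem_rcons inE.
  by case/orP=> [/eqP s'l|//]; move: store_s'; rewrite s'l load_l.
have [c c_in lbl_c] := ex_p s' s'_in.
have lt_ca : c < a.
  case: (ltngtP c a) => // [lt_ac|eq_ca].
    by have := no_store c lt_ac ltac:(lia); rewrite lbl_c /= store_s' eqxx.
  by move: lbl_c; rewrite eq_ca lbl_a => -[eq_ji _]; rewrite eq_ji eqxx in neq_ij.
have [Y [q [st_a' _ _]]] := pending a ltac:(lia).
apply: nested_prio_lt (nested_exec _) st_a' st_a _; last by rewrite eq_sym.
exact: ltnW (ltn_trans lt_ab lt_b).
Qed.

End Execution.

Theorem theorem2 (I : finType) (P : I -> cfg) (prio : I -> int)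
    (v : nat) (i j : I) (l s : nat) :
  act (P i) l = ALoad v ->
  act (P j) s = AStore v ->
  i != j ->
  (covered_load (P i) l v /\ intercepted_store (P j) s v) \/
  (covered_load (P i) l v /\ (prio j <= prio i)%R) \/
  (intercepted_store (P j) s v /\ (prio i <= prio j)%R) ->
  forall (sts : seq (stack I)) (lbls : seq (option (frame I))),
    execution P prio sts lbls ->
    forall a b : nat, ~ reads_from P lbls v j s a i l b.
Proof.
move=> _ _ neq_ij cases sts lbls exec a b rf.
have load_prio cov := covered_reads_from_prio exec cov neq_ij rf.
have store_prio icp := intercepted_reads_from_prio exec icp neq_ij rf.
case: cases => [[cov icp]|[[cov le_ji]|[icp le_ij]]].
- by have := lt_trans (load_prio cov) (store_prio icp); rewrite ltxx.
- by have := load_prio cov; rewrite ltNge le_ji.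
- by have := store_prio icp; rewrite ltNge le_ij.
Qed.
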